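(* Let $\mathbb F$ be a field and define $P_n:=z^2\bigl(y\,\mathrm{HC}_n+y^2\,\mathrm{HC}_n^2\bigr)$, where $y,z$ are variables distinct from the variables of $\mathrm{HC}_n$. Then the $\mathsf p$-family $(P)=(P_n)_{n\in\mathbb N}$ lies in $\mathrm{VNPC}(\trianglelefteq_{\mathsf p})$.
   Context: $\varepsilon$ is a new indeterminate. A $\mathsf p$-family $(f)=(f_n)_{n\in\mathbb N}$ is a sequence of multivariate polynomials whose number of variables and degree are polynomially bounded in $n$. For polynomials over a field $K$, $f\le g$ (projection) means $f=g(\alpha_1,\dots,\alpha_M)$ where each $\alpha_i$ is a variable of $f$ or an element of $K$; $(f)\le_{\mathsf p}(g)$ if there is a polynomially bounded $t$ with $f_n\le g_{t(n)}$ for all $n$. For $f,g$ over $\mathbb F$, $f\trianglelefteq g$ if $f+\varepsilon h\le g$ (projection over $\mathbb F(\varepsilon)$) for some polynomial $h$ over $\mathbb F[\varepsilon]$; $(f)\trianglelefteq_{\mathsf p}(g)$ if $f_n\trianglelefteq g_{t(n)}$ for all $n$ for some polynomially bounded $t$. $\mathrm{HC}_n=\sum_{\pi}\prod_{i=1}^n x_{i,\pi(i)}$, summing over permutations $\pi$ of $\{1,\dots,n\}$ that are $n$-cycles. $\mathrm{VNP}$ is the set of $\mathsf p$-families $(f)$ over $\mathbb F$ with $(f)\le_{\mathsf p}(\mathrm{HC})$, and $\mathrm{VNPC}(\trianglelefteq_{\mathsf p})=\{(f)\in\mathrm{VNP}:(\mathrm{HC})\trianglelefteq_{\mathsf p}(f)\}$.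 *)

From HB Require Import structures.
From mathcomp Require Import all_boot all_order all_algebra all_fingroup.
From mathcomp Require Import fraction.
From mathcomp Require Import mpoly.
Set Implicit Arguments. Unset Strict Implicit. Unset Printing Implicit Defensive.
Import GRing.Theory.
Local Open Scope ring_scope.

Definition poly_bounded (t : nat -> nat) : Prop :=
  exists c : nat, forall n, (t n <= c * n ^ c + c)%N.

(* total degree of a multivariate polynomial (0 for the zero polynomial) *)
Definition tdeg (R : nzRingType) (k : nat) (p : {mpoly R[k]}) : nat := (msize p).-1.

Definition is_pfamily (R : nzRingType) (N : nat -> nat) (f : forall n, {mpoly R[N n]}) : Prop :=
  poly_bounded N /\ poly_bounded (fun n => tdeg (f n)).

Definition proj_subst (K : comNzRingType) (m M : nat) (alpha : 'I_M -> 'I_m + K)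
  : M.-tuple {mpoly K[m]} :=
  [tuple match alpha i with inl j => 'X_j | inr c => c%:MP end | i < M].

Definition proj (K : comNzRingType) (m M : nat) (f : {mpoly K[m]}) (g : {mpoly K[M]}) : Prop :=
  exists alpha : 'I_M -> 'I_m + K, f = g \mPo proj_subst alpha.

Definition preduc (K : comNzRingType) (Nf Ng : nat -> nat)
  (f : forall n, {mpoly K[Nf n]}) (g : forall n, {mpoly K[Ng n]}) : Prop :=
  exists t, poly_bounded t /\ forall n, proj (f n) (g (t n)).

Definition Feps (F : fieldType) := {fraction {poly F}}.
Definition eps (F : fieldType) : Feps F := tofrac ('X : {poly F}).
Definition embF (F : fieldType) (c : F) : Feps F := tofrac (c%:P).
Definition embFeps (F : fieldType) (q : {poly F}) : Feps F := tofrac q.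

Definition bproj (F : fieldType) (m M : nat) (f : {mpoly F[m]}) (g : {mpoly F[M]}) : Prop :=
  exists h : {mpoly {poly F}[m]},
    proj (map_mpoly (@embF F) f + (eps F)%:MP * map_mpoly (@embFeps F) h)
         (map_mpoly (@embF F) g).

Definition bpreduc (F : fieldType) (Nf Ng : nat -> nat)
  (f : forall n, {mpoly F[Nf n]}) (g : forall n, {mpoly F[Ng n]}) : Prop :=
  exists t, poly_bounded t /\ forall n, bproj (f n) (g (t n)).

(* Hamiltonian cycle polynomial: variable x_{i,j} is 'X_(mxvec_index i j);
   an n-cycle is a permutation with exactly one cycle (orbit), of length n. *)
Definition is_ncycle (n : nat) (s : {perm 'I_n}) : bool := #|porbits s| == 1%N.

Definition HC (R : nzRingType) (n : nat) : {mpoly R[n * n]} :=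
  \sum_(s : {perm 'I_n} | is_ncycle s) \prod_(i < n) 'X_(mxvec_index i (s i)).

Definition VNP (F : fieldType) (N : nat -> nat) (f : forall n, {mpoly F[N n]}) : Prop :=
  is_pfamily f /\ preduc f (@HC F).

Definition VNPC (F : fieldType) (N : nat -> nat) (f : forall n, {mpoly F[N n]}) : Prop :=
  VNP f /\ bpreduc (@HC F) f.

Definition yvar (n : nat) : 'I_(n * n + 2) := rshift (n * n) (0 : 'I_2).
Definition zvar (n : nat) : 'I_(n * n + 2) := rshift (n * n) (1 : 'I_2).
Definition HCext (F : fieldType) (n : nat) : {mpoly F[n * n + 2]} :=
  HC F n \mPo [tuple 'X_(lshift 2 i) | i < n * n].

Definition Pfam (F : fieldType) (n : nat) : {mpoly F[n * n + 2]} :=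
  'X_(zvar n) ^+ 2 * ('X_(yvar n) * HCext F n + 'X_(yvar n) ^+ 2 * HCext F n ^+ 2).

(* Write hcsum w for the sum, over the cyclic permutations f of a finite set V,
   of \prod_x w x (f x); thus HC_n is hcsum of the n x n matrix of variables.
   Exchanging the successors of a vertex of one weighted digraph and of a vertex
   of another splices their Hamiltonian cycles, so the glued digraph has the
   product of the two sums.  A ladder with three vertices per vertex of a digraph
   G and one edge of weight y has one Hamiltonian cycle of weight 1, and one of
   weight y \prod_i G i (sg i) for each Hamiltonian cycle sg of G; its sum is
   1 + y hcsum G.  Gluing the variable matrix, the ladder over it and loops of
   weights z, z, y realises z^2 y HC_n (1 + y HC_n) = P_n as a projection of
   HC_(4n+3).  Conversely, y = eps^2 and z = eps^-1 turn P_n into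
   HC_n + eps^2 HC_n^2, a border projection. *)

From HB Require Import structures.
From mathcomp Require Import all_boot all_order all_algebra all_fingroup.
From mathcomp Require Import fraction.
From mathcomp Require Import mpoly.
From mathcomp Require Import ring zify.
Set Implicit Arguments. Unset Strict Implicit. Unset Printing Implicit Defensive.
Import GRing.Theory.
Local Open Scope ring_scope.

Section FullCycle.
Variable V : finType.
Implicit Types (f : V -> V) (x y z : V).

Definition full_cycle f := (0 < #|V|)%N && [forall x, forall y, fconnect f x y].

Lemma full_cycleP f :
  reflect (0 < #|V| /\ forall x y, fconnect f x y)%N (full_cycle f).
Proof.
apply: (iffP andP) => -[V0 conn]; split=> //.
  by move=> x y; move/forallP/(_ x)/forallP: conn; apply.
by apply/forallP => x; apply/forallP.
Qed.

Lemma fconnect_ind f (P : pred V) x y :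
  (forall u, P u -> P (f u)) -> fconnect f x y -> P x -> P y.
Proof.
move=> Pf /iter_findex <-; elim: (findex f x y) => [|k IHk] //= Px.
exact/Pf/IHk.
Qed.

Lemma full_cycle_ind f (P : pred V) :
  full_cycle f -> (forall u, P u -> P (f u)) -> forall x y, P x -> P y.
Proof. by move=> /full_cycleP[_ conn] Pf x y; apply: fconnect_ind (conn x y). Qed.

Lemma full_cycle_surj f y : full_cycle f -> exists x, f x = y.
Proof.
move=> /full_cycleP[_ /(_ (f y) y) /iter_findex]; set k := findex _ _ _.
by rewrite -iterSr iterS => <-; exists (iter k f y).
Qed.

Lemma full_cycle_inj f : full_cycle f -> injective f.
Proof.
move=> cf; have im_f : f @: [set: V] = [set: V].
  by apply/setP => y; rewrite inE; have [x <-] := full_cycle_surj y cf; apply: imset_f.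
have /imset_injP f_inj : #|f @: [set: V]| == #|[set: V]| by rewrite im_f.
by move=> x y; apply: f_inj; rewrite inE.
Qed.

Lemma full_cycle_no_2cycle f x y z :
  full_cycle f -> f x = y -> f y = x -> z != x -> z != y -> False.
Proof.
move=> cf fx fy zx zy; suff: (z == x) || (z == y) by rewrite (negbTE zx) (negbTE zy).
apply: (@full_cycle_ind f (fun u => (u == x) || (u == y)) cf _ x).
  by move=> u /orP[] /eqP->; rewrite ?fx ?fy eqxx ?orbT.
by rewrite /= eqxx.
Qed.

Lemma fconnect_porbit (s : {perm V}) x y : fconnect s x y = (y \in porbit s x).
Proof.
apply/idP/porbitP => [/iter_findex <-|[i ->]]; last by rewrite permX fconnect_iter.
by exists (findex s x y); rewrite permX.
Qed.

Lemma full_cycle_porbits (s : {perm V}) : full_cycle s = (#|porbits s| == 1%N).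
Proof.
apply/full_cycleP/cards1P => [[/card_gt0P[x0 _] conn]|[X porbitsX]].
  have orbT x : porbit s x = setT.
    by apply/setP => y; rewrite inE -fconnect_porbit conn.
  exists setT; apply/setP => X; rewrite inE.
  by apply/imsetP/eqP => [[x _ ->]|->]; [exact: orbT | exists x0; rewrite ?orbT].
have orbX x : porbit s x = X by apply/set1P; rewrite -porbitsX imset_f.
split; last by move=> x y; rewrite fconnect_porbit orbX -(orbX y) porbit_id.
have /imsetP[x _ _] : X \in porbits s by rewrite porbitsX set11.
by apply/card_gt0P; exists x.
Qed.

End FullCycle.

Section Transfer.
Variables (V W : finType) (f : V -> V) (g : W -> W).

Lemma full_cycle_factor (h : W -> V) (h' : V -> W) :
  cancel h' h -> (forall u, h (g u) = h u \/ h (g u) = f (h u)) ->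
  full_cycle g -> full_cycle f.
Proof.
move=> h'K hg /full_cycleP[/card_gt0P[u0 _] conn]; apply/full_cycleP.
split=> [|x y]; first by apply/card_gt0P; exists (h u0).
rewrite -(h'K y); apply: (@fconnect_ind _ g (fun v => fconnect f x (h v)) (h' x)).
- move=> u /connect_trans; apply; have [->|->] := hg u; [exact: connect0|exact: fconnect1].
- exact: conn.
- by rewrite h'K connect0.
Qed.

Lemma full_cycle_lift (e : V -> W) :
  (forall x, fconnect g (e x) (e (f x))) ->
  (forall u, (exists x, fconnect g (e x) u) /\ (exists x, fconnect g u (e x))) ->
  full_cycle f -> full_cycle g.
Proof.
move=> ge reach cf; have /full_cycleP[/card_gt0P[x0 _] _] := cf.
apply/full_cycleP; split=> [|u v]; first by apply/card_gt0P; exists (e x0).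
have [_ [x ux]] := reach u; have [[y yv] _] := reach v.
apply: connect_trans ux (connect_trans _ yv).
apply: (@full_cycle_ind _ f (fun y => fconnect g (e x) (e y)) cf _ x).
  by move=> z /connect_trans; apply.
exact: connect0.
Qed.

Lemma full_cycle_lift_iter (e : V -> W) (r : W -> V) k :
  (forall x, iter k g (e x) = e (f x)) ->
  (forall u, exists2 i, (i <= k)%N & iter i g (e (r u)) = u) ->
  full_cycle f -> full_cycle g.
Proof.
move=> gk reach; apply: (full_cycle_lift (e := e)) => [x|u].
  by rewrite -gk fconnect_iter.
have [i le_ik gi] := reach u; split.
  by exists (r u); rewrite -[X in fconnect _ _ X]gi fconnect_iter.
by exists (f (r u)); rewrite -gk -(subnK le_ik) iterD gi fconnect_iter.
Qed.

End Transfer.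

Definition hcsum (R : comPzRingType) (V : finType) (w : V -> V -> R) : R :=
  \sum_(f : {ffun V -> V} | full_cycle f) \prod_x w x (f x).

Section HcsumTheory.
Variables (R : comPzRingType) (V : finType).
Implicit Type w : V -> V -> R.

Lemma eq_hcsum w w' : w =2 w' -> hcsum w = hcsum w'.
Proof. by move=> ww'; apply: eq_bigr => f _; apply: eq_bigr => x _. Qed.

Lemma hcsum_rmorph (S : comPzRingType) (phi : {rmorphism R -> S}) w :
  phi (hcsum w) = hcsum (fun u v => phi (w u v)).
Proof. by rewrite rmorph_sum; apply: eq_bigr => f _; rewrite rmorph_prod. Qed.

Lemma sum_ncycles_hcsum w :
  \sum_(s : {perm V} | #|porbits s| == 1%N) \prod_x w x (s x) = hcsum w.
Proof.
rewrite /hcsum (reindex_onto (fun s : {perm V} => pval s) (insubd (1%g : {perm V}))).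
  2: by move=> f cf; rewrite insubdK //; apply/injectiveP; apply: full_cycle_inj cf.
  apply: eq_big => [s|s _]; last by apply: eq_bigr => x _; rewrite pvalE.
  by rewrite valKd eqxx andbT -full_cycle_porbits pvalE.
Qed.

Lemma hcsum_relabel (W : finType) (e : W -> V) (e' : V -> W) w :
  cancel e e' -> cancel e' e -> hcsum (fun i j => w (e i) (e j)) = hcsum w.
Proof.
move=> eK e'K; pose conj (g : {ffun W -> W}) := [ffun x => e (g (e' x))].
pose conj' (f : {ffun V -> V}) := [ffun i => e' (f (e i))].
rewrite [RHS](reindex conj); last first.
  by apply: onW_bij; exists conj' => g; apply/ffunP => x; rewrite !ffunE ?eK ?e'K.
apply: eq_big => [g|g _].
  apply/idP/idP => cg.
    by apply: (full_cycle_factor (h' := e') e'K _ cg) => i; right; rewrite ffunE eK.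
  by apply: (full_cycle_factor (h' := e) eK _ cg) => x; right; rewrite ffunE eK.
rewrite (reindex e); last by apply: onW_bij; exists e'.
by apply: eq_bigr => i _; rewrite ffunE eK.
Qed.

End HcsumTheory.

Lemma hcsum_loop (R : comPzRingType) (c : R) : hcsum (fun _ _ : unit => c) = c.
Proof.
rewrite /hcsum (big_pred1 [ffun _ => tt]) => [|f].
  by rewrite (big_pred1 tt) ?ffunE //; case.
have -> : f = [ffun _ => tt] by apply/ffunP => -[]; rewrite ffunE; case: (f tt).
rewrite /= eqxx; apply/full_cycleP; split=> [|[] []]; [by rewrite card_unit | exact: connect0].
Qed.

Lemma HC_comp (R : comNzRingType) m k (t : (m * m).-tuple {mpoly R[k]}) :
  HC R m \mPo t = hcsum (fun i j : 'I_m => tnth t (mxvec_index i j)).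
Proof.
rewrite /HC rmorph_sum -sum_ncycles_hcsum; apply: eq_bigr => s _.
by rewrite rmorph_prod; apply: eq_bigr => i _; rewrite /= comp_mpolyXU -tnth_nth.
Qed.

Section Glue.
Variables (V1 V2 : finType) (a : V1) (b : V2).

(* The successors of [a] and of [b] are exchanged, so that a cycle through [a]
   and a cycle through [b] splice into a single cycle. *)
Definition glue (T : Type) (z0 : T) (G1 : V1 -> V1 -> T) (G2 : V2 -> V2 -> T)
    (u v : V1 + V2) : T :=
  match u, v with
  | inl x, inl x' => if x == a then z0 else G1 x x'
  | inl x, inr y' => if x == a then G2 b y' else z0
  | inr y, inr y' => if y == b then z0 else G2 y y'
  | inr y, inl x' => if y == b then G1 a x' else z0
  end.

Definition glue_edge (u v : V1 + V2) : bool :=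
  match u, v with
  | inl x, inl _ => x != a
  | inl x, inr _ => x == a
  | inr y, inr _ => y != b
  | inr y, inl _ => y == b
  end.

Definition glue_fun (f1 : V1 -> V1) (f2 : V2 -> V2) : {ffun V1 + V2 -> V1 + V2} :=
  [ffun u => match u with
             | inl x => if x == a then inr (f2 b) else inl (f1 x)
             | inr y => if y == b then inl (f1 a) else inr (f2 y)
             end].

Definition getl (u : V1 + V2) : V1 := if u is inl x then x else a.
Definition getr (u : V1 + V2) : V2 := if u is inr y then y else b.

Definition unglue_l (f : V1 + V2 -> V1 + V2) : {ffun V1 -> V1} :=
  [ffun x => getl (f (if x == a then inr b else inl x))].
Definition unglue_r (f : V1 + V2 -> V1 + V2) : {ffun V2 -> V2} :=
  [ffun y => getr (f (if y == b then inl a else inr y))].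

Lemma glue_edge_fun f1 f2 u : glue_edge u (glue_fun f1 f2 u).
Proof. by case: u => [x|y]; rewrite ffunE /=; [case: (eqVneq x a) | case: (eqVneq y b)]. Qed.

Lemma unglue_lK (f1 : {ffun V1 -> V1}) f2 : unglue_l (glue_fun f1 f2) = f1.
Proof.
apply/ffunP => x; rewrite !ffunE.
by case: (eqVneq x a) => [->|] /=; rewrite ?eqxx // => /negbTE->.
Qed.

Lemma unglue_rK f1 (f2 : {ffun V2 -> V2}) : unglue_r (glue_fun f1 f2) = f2.
Proof.
apply/ffunP => y; rewrite !ffunE.
by case: (eqVneq y b) => [->|] /=; rewrite ?eqxx // => /negbTE->.
Qed.

Lemma unglueK (f : {ffun V1 + V2 -> V1 + V2}) :
  (forall u, glue_edge u (f u)) -> glue_fun (unglue_l f) (unglue_r f) = f.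
Proof.
move=> fE; apply/ffunP => u; rewrite !ffunE; have := fE u.
case: u => [x|y] /=; [case: (eqVneq x a) => [->|xa] | case: (eqVneq y b) => [->|yb]];
  rewrite ?ffunE ?eqxx ?(negbTE xa) ?(negbTE yb); case: (f _) => //=.
Qed.

Section GlueCycles.
Variables (f1 : V1 -> V1) (f2 : V2 -> V2).
Local Notation J := (glue_fun f1 f2).

Lemma full_cycle_glue_fun_l : full_cycle J -> full_cycle f1.
Proof.
apply: (full_cycle_factor (h := getl) (h' := inl) (fun _ => erefl)).
move=> -[x|y]; rewrite ffunE /=.
  by case: eqP => [->|_]; [left|right].
by case: eqP => [_|_]; [right|left].
Qed.

Lemma full_cycle_glue_fun_r : full_cycle J -> full_cycle f2.
Proof.
apply: (full_cycle_factor (h := getr) (h' := inr) (fun _ => erefl)).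
move=> -[x|y]; rewrite ffunE /=.
  by case: eqP => [_|_]; [right|left].
by case: eqP => [->|_]; [left|right].
Qed.

Lemma full_cycle_glue_fun : full_cycle f1 -> full_cycle f2 -> full_cycle J.
Proof.
move=> c1 c2.
have Jr y : y != b -> J (inr y) = inr (f2 y) by rewrite ffunE => /negbTE->.
have to_b y : fconnect J (inr y) (inr b).
  apply: contraT => yb; suff: ~~ fconnect J (inr b) (inr b) by rewrite connect0.
  apply: (@full_cycle_ind _ f2 (fun y => ~~ fconnect J (inr y) (inr b)) c2 _ y) => // z.
  apply: contra => zb; have [-> //|/Jr Jz] := eqVneq z b.
  by apply: connect_trans zb; rewrite -Jz fconnect1.
have from_a y : fconnect J (inl a) (inr y).
  have Ja : J (inl a) = inr (f2 b) by rewrite ffunE eqxx.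
  apply: (@full_cycle_ind _ f2 (fun y => fconnect J (inl a) (inr y)) c2 _ (f2 b)).
    move=> z az; have [-> |/Jr Jz] := eqVneq z b; first by rewrite -Ja fconnect1.
    by apply: connect_trans az _; rewrite -Jz fconnect1.
  by rewrite -Ja fconnect1.
have Jb : J (inr b) = inl (f1 a) by rewrite ffunE eqxx.
apply: (full_cycle_lift (e := inl) _ _ c1) => [x|[x|y]].
- have [->|/negbTE xa] := eqVneq x a.
    by rewrite -Jb (connect_trans (from_a b)) ?fconnect1.
  have Jx : J (inl x) = inl (f1 x) by rewrite ffunE xa.
  by rewrite -Jx fconnect1.
- by split; exists x; apply: connect0.
- split; first by exists a.
  by exists (f1 a); rewrite -Jb (connect_trans (to_b y)) ?fconnect1.
Qed.

Lemma full_cycle_glue_funE : full_cycle J = full_cycle f1 && full_cycle f2.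
Proof.
apply/idP/andP => [cJ|[]]; last exact: full_cycle_glue_fun.
by rewrite full_cycle_glue_fun_l // full_cycle_glue_fun_r.
Qed.

End GlueCycles.

Section GlueWeight.
Variables (R : comPzRingType) (G1 : V1 -> V1 -> R) (G2 : V2 -> V2 -> R).

Lemma glue_off_edge u v : ~~ glue_edge u v -> glue 0 G1 G2 u v = 0.
Proof. by case: u => x; case: v => y /=; case: eqP. Qed.

Lemma prod_glue_fun f1 f2 :
  \prod_u glue 0 G1 G2 u (glue_fun f1 f2 u) =
  (\prod_x G1 x (f1 x)) * \prod_y G2 y (f2 y).
Proof.
rewrite big_sumType /= (bigD1 a) // [in RHS](bigD1 a) // (bigD1 b) // [in RHS](bigD1 b) //=.
rewrite !ffunE !eqxx /=.
rewrite (eq_bigr (fun x => G1 x (f1 x))) => [|x /negbTE xa]; last by rewrite ffunE xa.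
rewrite [X in _ * (_ * X) = _](eq_bigr (fun y => G2 y (f2 y))) => [|y /negbTE yb].
  by ring.
by rewrite ffunE yb.
Qed.

Lemma hcsum_glue : hcsum (glue 0 G1 G2) = hcsum G1 * hcsum G2.
Proof.
rewrite /hcsum (bigID (fun f : {ffun _} => [forall u, glue_edge u (f u)])) /=.
rewrite [X in _ + X]big1 ?addr0 => [|f /andP[_ /forallPn[u /glue_off_edge Gu]]]; last first.
  by rewrite (bigD1 u) //= Gu mul0r.
rewrite (reindex_onto (fun p : {ffun V1 -> V1} * {ffun V2 -> V2} => glue_fun p.1 p.2)
                      (fun f => (unglue_l f, unglue_r f))) => [|f /andP[_ /forallP]].
  rewrite big_distrlr pair_big /=; apply: eq_big => [[f1 f2]|[f1 f2] _] /=.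
    have -> : [forall u, glue_edge u (glue_fun f1 f2 u)].
      by apply/forallP => u; apply: glue_edge_fun.
    by rewrite full_cycle_glue_funE unglue_lK unglue_rK eqxx !andbT.
  by rewrite prod_glue_fun.
exact: unglueK.
Qed.

End GlueWeight.

Lemma glue_map (T T' : Type) (phi : T -> T') z0 G1 G2 u v :
  phi (glue z0 G1 G2 u v) =
  glue (phi z0) (fun x x' => phi (G1 x x')) (fun y y' => phi (G2 y y')) u v.
Proof. by case: u => x; case: v => y /=; case: ifP. Qed.

End Glue.

Section Ladder.
Variables (S : finType) (nx : S -> S) (s0 : S).
Local Notation L := ((S + S) + S)%type.

(* Vertex [i] of [G] becomes the rung in_i = [inl (inl i)], mid_i = [inl (inr i)],
   out_i = [inr i]; [y] weighs the edge mid_s0 -> out_s0. *)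
Definition ladder (T : Type) (z0 o1 y : T) (G : S -> S -> T) (u v : L) : T :=
  match u, v with
  | inl (inl i), inl (inr j) => if j == i then o1 else z0
  | inl (inl i), inr j => if j == nx i then o1 else z0
  | inl (inr i), inr j => if j == i then (if i == s0 then y else o1) else z0
  | inl (inr i), inl (inl j) => if j == i then o1 else z0
  | inr i, inl (inr j) => if j == i then o1 else z0
  | inr i, inl (inl j) => G i j
  | _, _ => z0
  end.

Definition ladder_edge (u v : L) : bool :=
  match u, v with
  | inl (inl i), inl (inr j) => j == i
  | inl (inl i), inr j => j == nx i
  | inl (inr i), inr j => j == i
  | inl (inr i), inl (inl j) => j == i
  | inr i, inl (inr j) => j == i
  | inr _, inl (inl _) => true
  | _, _ => false
  end.

Definition ladder_rev : {ffun L -> L} :=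
  [ffun u => match u with
             | inl (inl i) => inr (nx i)
             | inl (inr i) => inl (inl i)
             | inr i => inl (inr i)
             end].

Definition ladder_fwd (sg : S -> S) : {ffun L -> L} :=
  [ffun u => match u with
             | inl (inl i) => inl (inr i)
             | inl (inr i) => inr i
             | inr i => inl (inl (sg i))
             end].

Definition rung (u : L) : S :=
  match u with inl (inl i) | inl (inr i) | inr i => i end.

Definition ladder_perm (f : L -> L) : {ffun S -> S} := [ffun i => rung (f (inr i))].

Lemma ladder_permK (sg : {ffun S -> S}) : ladder_perm (ladder_fwd sg) = sg.
Proof. by apply/ffunP => i; rewrite !ffunE. Qed.

Lemma ladder_edge_fwd sg u : ladder_edge u (ladder_fwd sg u).
Proof. by case: u => [[i|i]|i]; rewrite ffunE /=. Qed.

Lemma ladder_edge_rev u : ladder_edge u (ladder_rev u).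
Proof. by case: u => [[i|i]|i]; rewrite ffunE /=. Qed.

Lemma full_cycle_ladder_fwd sg : full_cycle (ladder_fwd sg) = full_cycle sg.
Proof.
apply/idP/idP.
  apply: (full_cycle_factor (h := rung) (h' := inr) (fun _ => erefl)).
  by case=> [[i|i]|i]; rewrite ffunE /=; [left|left|right].
apply: (full_cycle_lift_iter (e := fun i => inl (inl i)) (r := rung) (k := 3)).
  by move=> i; rewrite /= !ffunE.
by case=> [[i|i]|i]; [exists 0%N | exists 1%N | exists 2%N]; rewrite //= ?ffunE.
Qed.

Lemma full_cycle_ladder_rev : full_cycle nx -> full_cycle ladder_rev.
Proof.
apply: (full_cycle_lift_iter (e := inr) (r := rung) (k := 3)).
  by move=> i; rewrite /= !ffunE.
by case=> [[i|i]|i]; [exists 2%N | exists 1%N | exists 0%N]; rewrite //= ?ffunE.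
Qed.

Section LadderCycles.
Variable f : {ffun L -> L}.
Hypotheses (cnx : full_cycle nx) (cf : full_cycle f).
Hypothesis fE : forall u, ladder_edge u (f u).

Lemma ladder_mid_cases i :
  f (inl (inl i)) = inl (inr i) /\ f (inl (inr i)) = inr i \/
  f (inr i) = inl (inr i) /\ f (inl (inr i)) = inl (inl i).
Proof.
have [u fu] := full_cycle_surj (inl (inr i)) cf.
have pred_mid : u = inl (inl i) \/ u = inr i.
  by have := fE u; rewrite fu; case: u {fu} => [[j|j]|j] //= /eqP->; [left|right].
have succ_mid : f (inl (inr i)) = inl (inl i) \/ f (inl (inr i)) = inr i.
  by have := fE (inl (inr i)); case: (f _) => [[j|j]|j] //= /eqP->; [left|right].
case: pred_mid fu succ_mid => -> fu [] fm; [|by left|by right|].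
- by case: (full_cycle_no_2cycle (z := inr i) cf fu fm).
- by case: (full_cycle_no_2cycle (z := inl (inl i)) cf fu fm).
Qed.

Lemma ladder_back i : f (inl (inr i)) = inl (inl i) ->
  f (inr i) = inl (inr i) /\ f (inl (inl i)) = inr (nx i).
Proof.
move=> fm; have [[_ fm']|[fo _]] := ladder_mid_cases i; first by rewrite fm in fm'.
split=> //; have := fE (inl (inl i)); case fi: (f _) => [[j|j]|j] //= /eqP ji.
by move: fi; rewrite ji -fo => /(full_cycle_inj cf).
by rewrite ji.
Qed.

Lemma ladder_back_nx i : f (inl (inr i)) = inl (inl i) ->
  f (inl (inr (nx i))) = inl (inl (nx i)).
Proof.
move=> /ladder_back[_ fi]; have [[_ fm]|[_ //]] := ladder_mid_cases (nx i).
by move: fi; rewrite -fm => /(full_cycle_inj cf).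
Qed.

Lemma ladder_fwd_step i : f (inl (inr i)) != inl (inl i) ->
  [/\ f (inl (inl i)) = inl (inr i), f (inl (inr i)) = inr i
     & f (inr i) = inl (inl (rung (f (inr i))))].
Proof.
move=> /eqP fm; have [[fi fm']|[] //] := ladder_mid_cases i.
split=> //; have := fE (inr i); case fo: (f _) => [[j|j]|j] //= /eqP ji.
by move: fo; rewrite ji -fi => /(full_cycle_inj cf).
Qed.

Lemma ladder_cycle_cases : f = ladder_rev \/ f = ladder_fwd (ladder_perm f).
Proof.
pose back i := f (inl (inr i)) == inl (inl i).
have back_nx i : back i -> back (nx i) by rewrite /back => /eqP/ladder_back_nx->.
have [back0|fwd0] := boolP (back s0).
  left; apply/ffunP => -[[i|i]|i]; rewrite ffunE;
  have /eqP fm := full_cycle_ind cnx back_nx i back0;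
  by case: (ladder_back fm).
have fwd i : ~~ back i by apply: contra fwd0 => /(full_cycle_ind cnx back_nx s0).
right; apply/ffunP => -[[i|i]|i]; rewrite !ffunE.
all: by case: (ladder_fwd_step (fwd i)) => fi fm fo.
Qed.

End LadderCycles.

Section LadderWeight.
Variables (R : comPzRingType) (y : R) (G : S -> S -> R).

Lemma ladder_off_edge u v : ~~ ladder_edge u v -> ladder 0 1 y G u v = 0.
Proof. by case: u => [[i|i]|i]; case: v => [[j|j]|j] //=; case: eqP. Qed.

Lemma prod_ladder_rev : \prod_u ladder 0 1 y G u (ladder_rev u) = 1.
Proof. by rewrite !big_sumType /= !big1 ?mulr1 // => i _; rewrite ffunE /= eqxx. Qed.

Lemma prod_ladder_fwd sg :
  \prod_u ladder 0 1 y G u (ladder_fwd sg u) = y * \prod_i G i (sg i).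
Proof.
rewrite !big_sumType /= [X in X * _ * _]big1 ?mul1r => [|i _]; last by rewrite ffunE /= eqxx.
congr (_ * _); last by apply: eq_bigr => i _; rewrite ffunE.
rewrite (bigD1 s0) //= ffunE /= !eqxx big1 ?mulr1 // => i /negbTE ni.
by rewrite ffunE /= eqxx ni.
Qed.

Lemma hcsum_ladder : full_cycle nx -> hcsum (ladder 0 1 y G) = 1 + y * hcsum G.
Proof.
move=> cnx; rewrite /hcsum.
rewrite (bigID (fun f : {ffun L -> L} => [forall u, ladder_edge u (f u)])) /=.
rewrite [X in _ + X]big1 ?addr0 => [|f /andP[_ /forallPn[u /ladder_off_edge Lu]]]; last first.
  by rewrite (bigD1 u) //= Lu mul0r.
rewrite (bigD1 ladder_rev) /=; last first.
  by rewrite full_cycle_ladder_rev //; apply/forallP => u; apply: ladder_edge_rev.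
rewrite prod_ladder_rev mulr_sumr; congr (_ + _).
rewrite (reindex_onto (fun sg : {ffun S -> S} => ladder_fwd sg) ladder_perm) => [|f].
  apply: eq_big => [sg|sg _]; last exact: prod_ladder_fwd.
  rewrite full_cycle_ladder_fwd ladder_permK eqxx andbT.
  have -> : [forall u, ladder_edge u (ladder_fwd sg u)].
    by apply/forallP => u; apply: ladder_edge_fwd.
  have [/full_cycleP[/card_gt0P[i _] _]|] //= := boolP (full_cycle sg).
  by apply/eqP => /ffunP/(_ (inl (inl i))); rewrite !ffunE.
move=> /andP[/andP[cf /forallP fE] /eqP nrev].
by have [] := ladder_cycle_cases cnx cf fE.
Qed.

End LadderWeight.

Lemma ladder_map (T T' : Type) (phi : T -> T') z0 o1 y G u v :
  phi (ladder z0 o1 y G u v) =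
  ladder (phi z0) (phi o1) (phi y) (fun i j => phi (G i j)) u v.
Proof. by case: u => [[i|i]|i]; case: v => [[j|j]|j] /=; repeat case: ifP. Qed.

End Ladder.

Lemma iter_ordS n (i : 'I_n) k : val (iter k (@ordS n) i) = ((i + k) %% n)%N.
Proof.
elim: k => [|k IHk] /=; first by rewrite addn0 modn_small.
by rewrite IHk -[((i + k) %% n).+1]addn1 modnDml addn1 addnS.
Qed.

Lemma full_cycle_ordS n : full_cycle (@ordS n.+1).
Proof.
apply/full_cycleP; split=> [|i j]; first by rewrite card_ord.
have <- : iter (j + (n.+1 - i)) (@ordS n.+1) i = j.
  apply: val_inj; rewrite iter_ordS addnCA subnKC; last exact: ltnW.
  by rewrite addnC modnDl modn_small.
exact: fconnect_iter.
Qed.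

Lemma hcsum0 (R : comPzRingType) (V : finType) : hcsum (fun _ _ : V => 0 : R) = 0.
Proof.
apply: big1 => f /full_cycleP[/card_gt0P[x _] _].
by rewrite (bigD1 x) //= mul0r.
Qed.

Lemma HC_X (R : comNzRingType) n :
  HC R n = hcsum (fun i j : 'I_n => 'X_(mxvec_index i j)).
Proof.
by rewrite -[LHS]comp_mpoly_id HC_comp; apply: eq_hcsum => i j; rewrite tnth_mktuple.
Qed.

Lemma HCext_X (F : fieldType) n :
  HCext F n = hcsum (fun i j : 'I_n => 'X_(lshift 2 (mxvec_index i j))).
Proof. by rewrite /HCext HC_comp; apply: eq_hcsum => i j; rewrite tnth_mktuple. Qed.

Lemma HC0 (R : comNzRingType) : HC R 0 = 0.
Proof.
by rewrite HC_X; apply: big_pred0 => f; apply/negP => /full_cycleP[]; rewrite card_ord.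
Qed.

Definition mxvec_pair m n (q : 'I_(m * n)) : 'I_m * 'I_n :=
  enum_val (cast_ord (esym (mxvec_cast m n)) q).

Lemma mxvec_pairK m n (i : 'I_m) (j : 'I_n) : mxvec_pair (mxvec_index i j) = (i, j).
Proof. by rewrite /mxvec_pair /mxvec_index cast_ordK enum_rankK. Qed.

Section Labels.
Variables (F : fieldType) (k : nat).

Definition label (l : 'I_k + F) : {mpoly F[k]} :=
  match l with inl j => 'X_j | inr c => c%:MP end.

Lemma proj_HC_hcsum (V : finType) (w : V -> V -> 'I_k + F) :
  proj (hcsum (fun u v => label (w u v))) (HC F #|V|).
Proof.
pose e (i : 'I_#|V|) : V := enum_val i.
exists (fun q => w (e (mxvec_pair q).1) (e (mxvec_pair q).2)).
rewrite HC_comp -(@hcsum_relabel _ _ _ e enum_rank) => [|i|v]; last first.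
- exact: enum_rankK.
- exact: enum_valK.
by apply: eq_hcsum => i j; rewrite tnth_mktuple mxvec_pairK.
Qed.

Lemma hcsum_glue_label (V1 V2 : finType) (a : V1) (b : V2) G1 G2 :
  hcsum (fun u v => label (glue a b (inr 0) G1 G2 u v)) =
  hcsum (fun u v => label (G1 u v)) * hcsum (fun u v => label (G2 u v)).
Proof.
by rewrite -(hcsum_glue a b); apply: eq_hcsum => u v; rewrite (glue_map _ _ label) /= mpolyC0.
Qed.

Lemma hcsum_ladder_label p (y : 'I_k + F) G :
  hcsum (fun u v => label (ladder (@ordS p.+1) ord0 (inr 0) (inr 1) y G u v)) =
  1 + label y * hcsum (fun u v => label (G u v)).
Proof.
rewrite -(hcsum_ladder ord0 _ _ (full_cycle_ordS p)).
by apply: eq_hcsum => u v; rewrite (ladder_map _ _ label) /= mpolyC0 mpolyC1.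
Qed.

End Labels.

Section Gadget.
Variables (F : fieldType) (p : nat).
Local Notation n := p.+1.
Local Notation lab := ('I_(n * n + 2) + F)%type.
Local Notation vert := (((('I_n + (('I_n + 'I_n) + 'I_n)) + unit) + unit) + unit)%type.

Definition HC_block (i j : 'I_n) : lab := inl (lshift 2 (mxvec_index i j)).

Definition HC_ladder := ladder (@ordS n) ord0 (inr 0) (inr 1) (inl (yvar n)) HC_block.

Definition loop (c : lab) (_ _ : unit) := c.

Definition Pgadget : vert -> vert -> lab :=
  glue (inl (inl (inl ord0))) tt (inr 0)
    (glue (inl (inl ord0)) tt (inr 0)
       (glue (inl ord0) tt (inr 0)
          (glue ord0 (inl (inl ord0)) (inr 0) HC_block HC_ladder)
          (loop (inl (zvar n))))
       (loop (inl (zvar n))))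
    (loop (inl (yvar n))).

Lemma card_Pgadget : #|{: vert}| = (4 * n + 3)%N.
Proof. rewrite !card_sum !card_ord card_unit; lia. Qed.

Lemma hcsum_Pgadget : hcsum (fun u v => label (Pgadget u v)) = Pfam F n.
Proof.
rewrite !hcsum_glue_label hcsum_ladder_label !hcsum_loop.
rewrite /Pfam (HCext_X F n) /=.
ring.
Qed.

End Gadget.

Lemma poly_bounded_sq (t : nat -> nat) a :
  (forall n, t n <= a * n ^ 2 + a)%N -> poly_bounded t.
Proof.
move=> ta; exists a.+2 => n; apply: leq_trans (ta n) _.
apply: leq_add; last by lia.
apply: leq_mul; first by lia.
by case: n => [|n] //; rewrite leq_pexp2l.
Qed.

Section TotalDegree.
Variables (R : idomainType) (k : nat).
Implicit Types p q : {mpoly R[k]}.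

Lemma tdegD_le p q a b :
  (tdeg p <= a -> tdeg q <= b -> tdeg (p + q) <= maxn a b)%N.
Proof. by rewrite /tdeg; have := msizeD_le p q; lia. Qed.

Lemma tdegM_le p q a b : (tdeg p <= a -> tdeg q <= b -> tdeg (p * q) <= a + b)%N.
Proof.
have [->|p0] := eqVneq p 0; first by rewrite mul0r /tdeg msize0.
have [->|q0] := eqVneq q 0; first by rewrite mulr0 /tdeg msize0.
move=> pa qb; apply: leq_trans (leq_add pa qb); rewrite /tdeg msizeM //.
move: p0 q0; rewrite -!msize_poly_eq0.
by case: (msize p) => // c; case: (msize q) => // d; rewrite addSn addnS.
Qed.

Lemma tdegX (i : 'I_k) : tdeg ('X_i : {mpoly R[k]}) = 1%N.
Proof. by rewrite /tdeg msizeX mdeg1. Qed.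

Lemma tdeg_hcsumX (V : finType) (w : V -> V -> 'I_k) :
  (@tdeg R k (hcsum (fun u v => 'X_(w u v))) <= #|V|)%N.
Proof.
apply: (big_ind (fun q => tdeg q <= #|V|)%N) => [|q q' ? ?|f _].
- by rewrite /tdeg msize0.
- by rewrite -[#|V|]maxnn; apply: tdegD_le.
rewrite -sum1_card; apply: (big_ind2 (fun q d => tdeg q <= d)%N) => [|q d q' d'|x _].
- by rewrite /tdeg msize1.
- exact: tdegM_le.
- by rewrite tdegX.
Qed.

End TotalDegree.

Lemma tdeg_Pfam (F : fieldType) n : (tdeg (Pfam F n) <= 2 * n + 4)%N.
Proof.
have tX i : (tdeg ('X_i : {mpoly F[n * n + 2]}) <= 1)%N by rewrite tdegX.
have tH : (tdeg (HCext F n) <= n)%N.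
  by rewrite HCext_X -[n in (_ <= n)%N]card_ord tdeg_hcsumX.
rewrite /Pfam !expr2.
apply: leq_trans (tdegM_le (tdegM_le (tX _) (tX _))
  (tdegD_le (tdegM_le (tX _) tH) (tdegM_le (tdegM_le (tX _) (tX _)) (tdegM_le tH tH)))) _.
lia.
Qed.

Lemma Pfam0 (F : fieldType) : Pfam F 0 = 0.
Proof. by rewrite /Pfam /HCext HC0 comp_mpoly0 mulr0 expr0n /= mulr0 !addr0 mulr0. Qed.

Lemma is_pfamily_Pfam (F : fieldType) : is_pfamily (@Pfam F).
Proof.
split; first by apply: (poly_bounded_sq (a := 2)) => n; lia.
by apply: (poly_bounded_sq (a := 4)) => n; apply: leq_trans (tdeg_Pfam F n) _; nia.
Qed.

Lemma preduc_Pfam_HC (F : fieldType) : preduc (@Pfam F) (@HC F).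
Proof.
exists (fun n => 4 * n + 3)%N; split; first by apply: (poly_bounded_sq (a := 4)) => n; nia.
case=> [|p].
  (* No permutation of the empty set has exactly one orbit: [HC_0 = 0 = P_0]. *)
  have := proj_HC_hcsum (fun _ _ : 'I_3 => inr 0 : 'I_(0 * 0 + 2) + F).
  by rewrite card_ord Pfam0 (eq_hcsum (w' := fun _ _ => 0)) ?hcsum0.
by have := proj_HC_hcsum (@Pgadget F p); rewrite card_Pgadget hcsum_Pgadget.
Qed.

Lemma map_HC (R S : comNzRingType) (phi : {rmorphism R -> S}) n :
  map_mpoly phi (HC R n) = HC S n.
Proof. by rewrite !HC_X hcsum_rmorph; apply: eq_hcsum => i j; rewrite /= map_mpolyX. Qed.

Lemma rmorph_Pfam (K : fieldType) (S : comNzRingType) n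
    (phi : {rmorphism {mpoly K[n * n + 2]} -> S}) :
  let H := hcsum (fun i j : 'I_n => phi 'X_(lshift 2 (mxvec_index i j))) in
  phi (Pfam K n) =
  phi 'X_(zvar n) ^+ 2 * (phi 'X_(yvar n) * H + phi 'X_(yvar n) ^+ 2 * H ^+ 2).
Proof. by rewrite /Pfam HCext_X rmorphM rmorphD !rmorphM hcsum_rmorph; ring. Qed.

Lemma map_Pfam (K K' : fieldType) (phi : {rmorphism K -> K'}) n :
  map_mpoly phi (Pfam K n) = Pfam K' n.
Proof.
rewrite (rmorph_Pfam (map_mpoly phi)) /Pfam HCext_X /= !map_mpolyX.
by congr (_ * (_ * _ + _ * _ ^+ 2)); apply: eq_hcsum => i j; rewrite map_mpolyX.
Qed.

Section BorderSubstitution.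
Variables (K : fieldType) (n : nat) (c : K).
Hypothesis c_neq0 : c != 0.

Definition border_subst (q : 'I_(n * n + 2)) : 'I_(n * n) + K :=
  match split q with
  | inl j => inl j
  | inr r => inr (if r == 0 then c ^+ 2 else c^-1) (* y := c ^+ 2, z := c^-1 *)
  end.

Lemma Pfam_border :
  Pfam K n \mPo proj_subst border_subst = HC K n + (c ^+ 2)%:MP * HC K n ^+ 2.
Proof.
have sub_X q : 'X_q \mPo proj_subst border_subst = label (border_subst q).
  by rewrite comp_mpolyXU -tnth_nth tnth_mktuple.
have split_l (j : 'I_(n * n)) : split (lshift 2 j) = inl j := unsplitK (inl _ j).
have split_r (r : 'I_2) : split (rshift (n * n) r) = inr r := unsplitK (inr _ r).
rewrite (rmorph_Pfam (comp_mpoly (proj_subst border_subst))) /= !sub_X.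
rewrite (eq_hcsum (w' := fun i j => 'X_(mxvec_index i j))); last first.
  by move=> i j; rewrite /= sub_X /border_subst split_l.
rewrite -HC_X /border_subst !split_r /=.
set H := HC K n; set C := (c ^+ 2)%:MP.
have CK : c^-1%:MP ^+ 2 * C = 1.
  by rewrite -rmorphXn -rmorphM /= exprVn mulVf ?expf_neq0 ?mpolyC1.
transitivity (c^-1%:MP ^+ 2 * C * H + c^-1%:MP ^+ 2 * C * C * H ^+ 2); first by ring.
by rewrite CK !mul1r.
Qed.

End BorderSubstitution.

HB.instance Definition _ (F : fieldType) :=
  GRing.RMorphism.copy (@embF F) ((@tofrac _) \o (@polyC F)).
HB.instance Definition _ (F : fieldType) :=
  GRing.RMorphism.copy (@embFeps F) (@tofrac _).

Lemma eps_neq0 (F : fieldType) : eps F != 0.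
Proof. by rewrite tofrac_eq0 polyX_eq0. Qed.

Lemma bproj_HC_Pfam (F : fieldType) n : bproj (HC F n) (Pfam F n).
Proof.
exists (('X : {poly F})%:MP * HC {poly F} n ^+ 2), (border_subst (n := n) (eps F)).
rewrite map_Pfam Pfam_border ?eps_neq0 // rmorphM rmorphXn /= !map_HC map_mpolyC.
by rewrite rmorphXn; ring.
Qed.

Theorem lemma4 (F : fieldType) : VNPC (@Pfam F).
Proof.
split; first by split; [exact: is_pfamily_Pfam | exact: preduc_Pfam_HC].
exists id; split; last exact: bproj_HC_Pfam.
by apply: (poly_bounded_sq (a := 1)) => n; nia.
Qed.
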